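(* Let $d \ge 1$ and $\rho \ge 0$ be integers and let $r^{(1)}, \dots, r^{(\rho)} \in (0,1)^d$ be pairwise incomparable points such that for each $j \in [d]$ the $\rho$ values $r^{(i)}_j$, $i \in [\rho]$, are distinct. Let $S$ be the record-setting region and $I$ the set of interior generators of these points. A point $g \in [0,1)^d$ belongs to $I$ if and only if (i) $g \in S$, and (ii) there exist $d$ distinct indices $i_1, \dots, i_d \in [\rho]$ such that $$g_j = r^{(i_j)}_j = \min\{ r^{(i_\ell)}_j : \ell \in [d]\} \quad \text{for every } j \in [d].$$
   Context: Notation: $[n] = \{1,\dots,n\}$. For $x,y \in \mathbb{R}^d$, $x \prec y$ means $x_j < y_j$ for all $j \in [d]$; $x \le y$ means $x_j \le y_j$ for all $j$; $x < y$ means $x \le y$ and $x \ne y$. Two points are incomparable if neither is $\le$ the other. Given points $r^{(1)},\dots,r^{(\rho)}$ (the ''current records''), the record-setting region is $S := \{x \in [0,1)^d : x \not\prec r^{(i)} \text{ for all } i \in [\rho]\}$. The generators of $S$ are the minimal elements of $S$ with respect to the partial order $\le$; the set of generators is denoted $G$. A point $x \in [0,1)^d$ is interior if all its coordinates are nonzero, and $I := \{g \in G : g \text{ interior}\}$ is the set of interior generators. *)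

(* Points of R^d are functions 'I_d -> R over an arbitrary
   real (ordered) field R; the statement is purely order-theoretic. *)
From HB Require Import structures.
From mathcomp Require Import all_boot all_order all_algebra.
Set Implicit Arguments. Unset Strict Implicit. Unset Printing Implicit Defensive.
Import Order.TTheory GRing.Theory Num.Theory.
Local Open Scope ring_scope.

Section Defs.
Variables (R : realFieldType) (d rho : nat).

Definition slt (x y : 'I_d -> R) : Prop := forall j, x j < y j.
Definition cle (x y : 'I_d -> R) : Prop := forall j, x j <= y j.
Definition in_cube (x : 'I_d -> R) : Prop := forall j, 0 <= x j /\ x j < 1.
Definition in_open_cube (x : 'I_d -> R) : Prop := forall j, 0 < x j /\ x j < 1.

Definition record_region (r : 'I_rho -> 'I_d -> R) (x : 'I_d -> R) : Prop :=
  in_cube x /\ forall i, ~ slt x (r i).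

Definition generator (r : 'I_rho -> 'I_d -> R) (g : 'I_d -> R) : Prop :=
  record_region r g /\
  ~ (exists y, record_region r y /\ cle y g /\ exists j, y j != g j).

Definition interior (x : 'I_d -> R) : Prop := forall j, x j != 0.

Definition interior_generator (r : 'I_rho -> 'I_d -> R) (g : 'I_d -> R) : Prop :=
  generator r g /\ interior g.

End Defs.

From HB Require Import structures.
From mathcomp Require Import all_boot all_order all_algebra.
Set Implicit Arguments. Unset Strict Implicit. Unset Printing Implicit Defensive.
Import Order.TTheory GRing.Theory Num.Theory.
Local Open Scope ring_scope.

(* An interior generator g has, for every coordinate k, a record r_i that
   touches g in coordinate k and lies strictly above g in every other one:
   otherwise the records that are above g off k all lie strictly below g k in
   coordinate k, and g k can be lowered to the largest of them (or to 0)
   while staying in S.  The records chosen for distinct coordinates are then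
   distinct, and each is coordinatewise minimal in its own coordinate.
   Conversely such records pin g: lowering any coordinate k of g puts the
   point strictly below the record chosen for k. *)

Section RecordSetting.
Variables (R : realFieldType) (d rho : nat) (r : 'I_rho -> 'I_d -> R).

Definition above_except (k : 'I_d) (g : 'I_d -> R) (i : 'I_rho) : bool :=
  [forall j, (j != k) ==> (g j < r i j)].

Lemma above_exceptP k g i :
  reflect (forall j, j != k -> g j < r i j) (above_except k g i).
Proof.
by apply: (iffP forallP) => h j; [move=> njk; apply: (implyP (h j)) | apply/implyP/h].
Qed.

Lemma above_except_le k g i :
  record_region r g -> above_except k g i -> r i k <= g k.
Proof.
move=> [_ gS] /above_exceptP gi; rewrite leNgt; apply/negP => rik_lt.
by apply: (gS i) => j; case: (eqVneq j k) => [-> | /gi].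
Qed.

Definition set_coord (g : 'I_d -> R) (k : 'I_d) (m : R) : 'I_d -> R :=
  fun j => if j == k then m else g j.

Lemma set_coord_record_region g k (m : R) :
  record_region r g -> 0 <= m -> m < g k ->
  (forall i, above_except k g i -> r i k <= m) ->
  record_region r (set_coord g k m).
Proof.
move=> [gcube _] m_ge0 m_lt bound_m; split.
  move=> j; rewrite /set_coord; case: (eqVneq j k) => [_ | _]; last exact: gcube.
  by split; last exact: lt_trans m_lt (gcube k).2.
move=> i below_ri.
have gi : above_except k g i.
  by apply/above_exceptP => j njk; have := below_ri j; rewrite /set_coord (negbTE njk).
by have := below_ri k; rewrite /set_coord eqxx ltNge bound_m.
Qed.

Lemma generator_witness g k :
  generator r g -> g k != 0 -> exists2 i, r i k = g k & above_except k g i.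
Proof.
move=> [gS gmin] gk_neq0.
case: (pickP [pred i | (r i k == g k) && above_except k g i]) => [i /andP[/eqP] | no_witness].
  by exists i.
have below_gk i : above_except k g i -> r i k < g k.
  move=> gi; rewrite lt_neqAle above_except_le // andbT.
  by apply: contraFN (no_witness i) => rik; rewrite /= rik.
pose m := \big[Order.max/0]_(i | above_except k g i) r i k.
have gk_gt0 : 0 < g k by rewrite lt_neqAle eq_sym gk_neq0 (gS.1 k).1.
case: gmin; exists (set_coord g k m); split; last split.
- apply: set_coord_record_region; rewrite ?bigmax_ge_id ?bigmax_lt //.
  by move=> i gi; apply: le_bigmax_cond.
- by move=> j; rewrite /set_coord; case: (eqVneq j k) => [-> | _] //; exact/ltW/bigmax_lt.
- by exists k; rewrite /set_coord eqxx lt_eqF ?bigmax_lt.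
Qed.

Definition witnesses (g : 'I_d -> R) (idx : 'I_d -> 'I_rho) : Prop :=
  forall k, r (idx k) k = g k /\ above_except k g (idx k).

Lemma interior_generator_witnesses g :
  interior_generator r g -> exists idx, witnesses g idx.
Proof.
move=> [ggen gint]; have [idx idx_eq idx_above] :=
  fin_all_exists2 (fun k => generator_witness ggen (gint k)).
by exists idx => k.
Qed.

Lemma witnesses_generator g idx :
  record_region r g -> witnesses g idx -> generator r g.
Proof.
move=> gS gidx; split=> // -[y [[_ yS] [y_le [k yk_neq]]]].
have [idx_k /above_exceptP idx_above] := gidx k.
apply: (yS (idx k)) => j; case: (eqVneq j k) => [-> | njk].
  by rewrite idx_k lt_neqAle yk_neq y_le.
exact: le_lt_trans (y_le j) (idx_above j njk).
Qed.

Lemma witnesses_interior g idx :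
  (forall i, in_open_cube (r i)) -> witnesses g idx -> interior g.
Proof.
by move=> rcube gidx j; rewrite -(gidx j).1 gt_eqF // (rcube _ j).1.
Qed.

Lemma witnesses_minimal g idx :
  witnesses g idx ->
  injective idx /\ forall j, g j = r (idx j) j /\ forall l, r (idx j) j <= r (idx l) j.
Proof.
move=> gidx.
have above j l : j != l -> r (idx j) j < r (idx l) j.
  by move=> njl; rewrite (gidx j).1; apply/above_exceptP: njl; exact: (gidx l).2.
split.
  move=> j l idx_jl; apply/eqP; apply: contraT => njl.
  by have := above j l njl; rewrite idx_jl ltxx.
move=> j; split=> [|l]; first by rewrite (gidx j).1.
by case: (eqVneq j l) => [-> // | /above/ltW].
Qed.

Lemma minimal_witnesses g idx :
  (forall j, injective (fun i => r i j)) -> injective idx ->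
  (forall j, g j = r (idx j) j /\ forall l, r (idx j) j <= r (idx l) j) ->
  witnesses g idx.
Proof.
move=> rinj idx_inj gmin k; split; first by rewrite (gmin k).1.
apply/above_exceptP => j njk; have [-> idx_le] := gmin j.
rewrite lt_neqAle idx_le andbT.
by apply: contra njk => /eqP /rinj /idx_inj ->.
Qed.

End RecordSetting.

Theorem theoremT (R : realFieldType) (d rho : nat) (hd : (1 <= d)%N)
  (r : 'I_rho -> 'I_d -> R)
  (hr : forall i, in_open_cube (r i))
  (hinc : forall i i', i != i' -> ~ cle (r i) (r i'))
  (hdist : forall j, injective (fun i => r i j))
  (g : 'I_d -> R) (hg : in_cube g) :
  interior_generator r g <->
  (record_region r g /\
   exists idx : 'I_d -> 'I_rho, injective idx /\
     forall j, g j = r (idx j) j /\ forall l, r (idx j) j <= r (idx l) j).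
Proof.
split.
- move=> gI; have [idx gidx] := interior_generator_witnesses gI.
  by split; [exact: gI.1.1 | exists idx; exact: witnesses_minimal].
- move=> [gS [idx [idx_inj gmin]]].
  have gidx := minimal_witnesses hdist idx_inj gmin.
  by split; [exact: witnesses_generator gidx | exact: witnesses_interior gidx].
Qed.
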